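(* For every finite simplicial graph $\Delta$ and every $m\in\mathbb{N}$, $m\ge1$, the partially commutative group $\mathbb{G}(\Delta)$ and the partially commutative group $\mathbb{G}(\Delta_m)$ of its $m$-inflation are universally equivalent.
   Context: $\mathbb{G}(\Gamma)=\langle V(\Gamma)\mid [x,y]=1 \text{ for } (x,y)\in E(\Gamma)\rangle$. The $m$-inflation $\Delta_m$ of $\Delta$ has vertices $v_1,\dots,v_m$ for each $v\in V(\Delta)$; $v_i,v_j$ are adjacent for $i\ne j$, and $v_i,w_k$ ($v\ne w$) are adjacent iff $(v,w)\in E(\Delta)$. Thus $\mathbb{G}(\Delta_m)$ is the graph product over $\Delta$ with vertex groups $\mathbb{Z}^m$. Two groups are universally equivalent if they satisfy the same universal first-order sentences in the language of groups. *)

From mathcomp Require Import all_boot.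
Set Implicit Arguments.
Unset Strict Implicit.
Unset Printing Implicit Defensive.

Inductive gterm : Type :=
  | GVar : nat -> gterm
  | GOne : gterm
  | GMul : gterm -> gterm -> gterm
  | GInv : gterm -> gterm.

Inductive qfformula : Type :=
  | FTrue : qfformula
  | FFalse : qfformula
  | FEq : gterm -> gterm -> qfformula
  | FNot : qfformula -> qfformula
  | FAnd : qfformula -> qfformula -> qfformula
  | FOr : qfformula -> qfformula -> qfformula
  | FImp : qfformula -> qfformula -> qfformula.

(* A group given as a carrier together with its equality (a congruence),
   e.g. words modulo the relations of a presentation. *)
Record groupStr := GroupStr {
  gcarrier :> Type;
  geq : gcarrier -> gcarrier -> Prop;
  gmul : gcarrier -> gcarrier -> gcarrier;
  ginv : gcarrier -> gcarrier;
  gone : gcarrier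
}.

Fixpoint eval_term (G : groupStr) (s : nat -> G) (t : gterm) : G :=
  match t with
  | GVar i => s i
  | GOne => gone G
  | GMul a b => gmul (eval_term s a) (eval_term s b)
  | GInv a => ginv (eval_term s a)
  end.

Fixpoint holds (G : groupStr) (s : nat -> G) (f : qfformula) : Prop :=
  match f with
  | FTrue => True
  | FFalse => False
  | FEq a b => geq (eval_term s a) (eval_term s b)
  | FNot g => ~ holds s g
  | FAnd g h => holds s g /\ holds s h
  | FOr g h => holds s g \/ holds s h
  | FImp g h => holds s g -> holds s h
  end.

(* A universal sentence  forall x_0 ... x_n, phi  (phi quantifier-free) holds
   in G iff phi holds under every assignment of the variables. *)
Definition satisfies_universal (G : groupStr) (phi : qfformula) : Prop :=
  forall s : nat -> G, holds s phi.

Definition universally_equivalent (G H : groupStr) : Prop :=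
  forall phi : qfformula, satisfies_universal G phi <-> satisfies_universal H phi.

Definition simplicial {V : finType} (e : rel V) : Prop :=
  symmetric e /\ irreflexive e.

Definition inflation_rel {V : finType} (e : rel V) (m : nat) : rel (V * 'I_m) :=
  fun p q => ((p.1 == q.1) && (p.2 != q.2)) || ((p.1 != q.1) && e p.1 q.1).

(* Words in the letters v^{+1} (v,true) and v^{-1} (v,false). *)
Definition letter_inv {V : Type} (x : V * bool) : V * bool := (x.1, ~~ x.2).
Definition word_inv {V : Type} (w : seq (V * bool)) : seq (V * bool) :=
  rev (map letter_inv w).

(* The congruence on words generated by free cancellation and the relations
   [x,y] = 1 for (x,y) an edge. *)
Inductive raag_eq {V : Type} (e : rel V) : seq (V * bool) -> seq (V * bool) -> Prop :=
  | raag_refl w : raag_eq e w w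
  | raag_sym u w : raag_eq e u w -> raag_eq e w u
  | raag_trans u v w : raag_eq e u v -> raag_eq e v w -> raag_eq e u w
  | raag_cancel u v x : raag_eq e (u ++ x :: letter_inv x :: v) (u ++ v)
  | raag_comm u v a b : e a b ->
      raag_eq e (u ++ (a, true) :: (b, true) :: v) (u ++ (b, true) :: (a, true) :: v).

Definition RAAG {V : Type} (e : rel V) : groupStr :=
  @GroupStr (seq (V * bool)) (raag_eq e) cat word_inv [::].
Arguments inflation_rel {V} e m.

(* G(Delta) embeds into G(Delta_m) by v |-> (v, i), with retraction (v, j) |-> v, so
   universal sentences pass from G(Delta_m) down to G(Delta).  Conversely, G(Delta_m) is
   the graph product over Delta of copies of Z^m: each element has a normal form, a reduced
   sequence of syllables (v, a) with 0 <> a in Z^m, unique up to swapping adjacent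
   syllables on adjacent vertices.  The homomorphism h_k : (v, i) |-> v^(k i) into G(Delta)
   sends this normal form to the syllables (v, sum_i k_i a_i), again a normal form as long
   as none of these weights vanishes; with k_i = N^i for N exceeding every coordinate
   involved, finitely many given elements thus keep nontrivial images.  A universal
   sentence failing in G(Delta_m) under some assignment therefore fails in G(Delta) under
   its image by a suitable h_k. *)

From Pilot Require Import Defs.
From mathcomp Require Import all_boot all_algebra zify.
Set Implicit Arguments.
Unset Strict Implicit.
Import GRing.Theory.

Section RaagEqTheory.
Variables (W : Type) (E : rel W).
Local Notation req := (raag_eq E).

Lemma letter_invK (x : W * bool) : letter_inv (letter_inv x) = x.
Proof. by case: x => a b; rewrite /letter_inv /= negbK. Qed.

Lemma word_inv_cat (u v : seq (W * bool)) : word_inv (u ++ v) = word_inv v ++ word_inv u.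
Proof. by rewrite /word_inv map_cat rev_cat. Qed.

Lemma raag_eq_ctx p q u v : req u v -> req (p ++ u ++ q) (p ++ v ++ q).
Proof.
elim=> {u v} [w|u w _ IH|u v w _ IH1 _ IH2|u v x|u v a b Eab].
- exact: raag_refl.
- exact: raag_sym.
- exact: raag_trans IH2.
- have := raag_cancel E (p ++ u) (v ++ q) x; by rewrite -!catA.
- have := raag_comm (p ++ u) (v ++ q) Eab; by rewrite -!catA.
Qed.

Lemma raag_eq_catl p u v : req u v -> req (p ++ u) (p ++ v).
Proof. by move=> h; have := raag_eq_ctx p [::] h; rewrite !cats0. Qed.

Lemma raag_eq_catr q u v : req u v -> req (u ++ q) (v ++ q).
Proof. exact: (raag_eq_ctx [::] q). Qed.

Lemma raag_eq_cons x u v : req u v -> req (x :: u) (x :: v).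
Proof. exact: (raag_eq_catl [:: x]). Qed.

Lemma raag_eq_mulV u : req (u ++ word_inv u) [::].
Proof.
elim: u => [|x u IH] /=; first exact: raag_refl.
rewrite /word_inv /= rev_cons -cats1 catA.
apply: raag_trans (_ : req [:: x; letter_inv x] _).
  exact: (raag_eq_ctx [:: x] [:: letter_inv x] IH).
exact: (raag_cancel E [::] [::] x).
Qed.

Lemma raag_eq_Vmul u : req (word_inv u ++ u) [::].
Proof.
elim: u => [|x u IH] /=; first exact: raag_refl.
rewrite /word_inv /= rev_cons -cats1 -catA /=.
apply: raag_trans (_ : req _ (word_inv u ++ u)) IH.
have := raag_cancel E (word_inv u) u (letter_inv x); by rewrite letter_invK.
Qed.

Lemma raag_eq_div1 u v : req (u ++ word_inv v) [::] <-> req u v.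
Proof.
split=> [h|h]; last exact: (raag_trans (raag_eq_catr _ h) (raag_eq_mulV v)).
apply: raag_trans (_ : req (u ++ word_inv v ++ v) _).
  by have := raag_eq_catl u (raag_sym (raag_eq_Vmul v)); rewrite cats0.
by have := raag_eq_catr v h; rewrite catA.
Qed.

Hypothesis Esym : symmetric E.

Lemma raag_eq_swap_pos_neg a b :
  E a b -> req [:: (a, true); (b, false)] [:: (b, false); (a, true)].
Proof.
move=> Eab.
apply: raag_trans (_ : req [:: (b, false); (b, true); (a, true); (b, false)] _).
  exact: (raag_sym (raag_cancel E [::] _ (b, false))).
apply: raag_trans (_ : req [:: (b, false); (a, true); (b, true); (b, false)] _).
  by apply: (raag_comm [:: (b, false)] [:: (b, false)]); rewrite Esym.
exact: (raag_cancel E [:: (b, false); (a, true)] [::] (b, true)).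
Qed.

Lemma raag_eq_swap (x y : W * bool) : E x.1 y.1 -> req [:: x; y] [:: y; x].
Proof.
case: x => a [] ; case: y => b [] /= Eab.
- exact: (raag_comm [::] [::] Eab).
- exact: raag_eq_swap_pos_neg.
- by apply: raag_sym; apply: raag_eq_swap_pos_neg; rewrite Esym.
- apply: raag_trans (_ : req [:: (b, false); (b, true); (a, false); (b, false)] _).
    exact: (raag_sym (raag_cancel E [::] _ (b, false))).
  apply: raag_trans (_ : req [:: (b, false); (a, false); (b, true); (b, false)] _).
    have Eba : E b a by rewrite Esym.
    exact: (raag_eq_ctx [:: (b, false)] [:: (b, false)]
              (raag_eq_swap_pos_neg Eba)).
  exact: (raag_cancel E [:: (b, false); (a, false)] [::] (b, true)).
Qed.

Lemma raag_eq_pass x p q :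
  all (fun y => E x.1 y.1) p -> req (x :: p ++ q) (p ++ x :: q).
Proof.
elim: p => [|y p IH] /=; first by move=> _; exact: raag_refl.
case/andP=> Exy /IH h.
apply: raag_trans (_ : req (y :: x :: p ++ q) _); last exact: raag_eq_cons.
exact: (raag_eq_ctx [::] (p ++ q) (raag_eq_swap Exy)).
Qed.

Lemma raag_eq_swap_blocks p q :
  all (fun x => all (fun y => E x.1 y.1) q) p -> req (p ++ q) (q ++ p).
Proof.
elim: p => [|x p IH] /=; first by move=> _; rewrite cats0; exact: raag_refl.
case/andP=> hx /IH h.
exact: (raag_trans (raag_eq_cons x h) (raag_eq_pass p hx)).
Qed.

End RaagEqTheory.

Section WordHomomorphism.
Variables (W1 W2 : Type) (E1 : rel W1) (E2 : rel W2).
Variable g : W1 * bool -> seq (W2 * bool).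

Definition subst_word (w : seq (W1 * bool)) : seq (W2 * bool) := flatten (map g w).

Lemma subst_word_cat u v : subst_word (u ++ v) = subst_word u ++ subst_word v.
Proof. by rewrite /subst_word map_cat flatten_cat. Qed.

Hypothesis g_inv : forall x, g (letter_inv x) = word_inv (g x).

Lemma subst_word_inv w : subst_word (word_inv w) = word_inv (subst_word w).
Proof.
elim: w => [|x w IH] //=.
rewrite /word_inv /= rev_cons -cats1 -/(word_inv w) subst_word_cat IH.
by rewrite /subst_word /= cats0 g_inv -/(subst_word w) -word_inv_cat.
Qed.

Lemma eval_term_subst (s : nat -> seq (W1 * bool)) t :
  @eval_term (RAAG E2) (fun i => subst_word (s i)) t
  = subst_word (@eval_term (RAAG E1) s t).
Proof.
by elim: t => //= [a -> b ->|a ->]; rewrite ?subst_word_cat ?subst_word_inv.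
Qed.

Hypothesis g_comm : forall a b, E1 a b ->
  raag_eq E2 (g (a, true) ++ g (b, true)) (g (b, true) ++ g (a, true)).

Lemma subst_word_raag_eq u v : raag_eq E1 u v -> raag_eq E2 (subst_word u) (subst_word v).
Proof.
elim=> {u v} [u|u v _ IH|u v w _ IH1 _ IH2|u v x|u v a b Eab].
- exact: raag_refl.
- exact: raag_sym.
- exact: raag_trans IH2.
- rewrite !subst_word_cat /subst_word /= -/(subst_word v) g_inv catA -catA.
  apply: raag_eq_catl.
  by have := raag_eq_ctx [::] (subst_word v) (raag_eq_mulV E2 (g x)); rewrite -catA.
- rewrite !subst_word_cat /subst_word /= -/(subst_word v) !catA.
  by apply: raag_eq_catr; rewrite -!catA; apply: raag_eq_catl; apply: g_comm.
Qed.

End WordHomomorphism.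

Fixpoint atoms (f : qfformula) : seq (gterm * gterm) :=
  match f with
  | FEq a b => [:: (a, b)]
  | FNot g => atoms g
  | FAnd g h | FOr g h | FImp g h => atoms g ++ atoms h
  | _ => [::]
  end.

Fixpoint on_atoms (P : gterm -> gterm -> Prop) (f : qfformula) : Prop :=
  match f with
  | FEq a b => P a b
  | FNot g => on_atoms P g
  | FAnd g h | FOr g h | FImp g h => on_atoms P g /\ on_atoms P h
  | _ => True
  end.

Lemma on_atomsT (P : gterm -> gterm -> Prop) f : (forall a b, P a b) -> on_atoms P f.
Proof. by move=> hP; elim: f => //=. Qed.

Lemma on_atoms_all (P : gterm -> gterm -> Prop) (Q : pred (gterm * gterm)) f :
  (forall a b, Q (a, b) -> P a b) -> all Q (atoms f) -> on_atoms P f.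
Proof.
move=> hQ; elim: f => //= [a b|g IHg h IHh|g IHg h IHh|g IHg h IHh];
  rewrite ?all_cat ?andbT; [exact: hQ|..]; by case/andP=> /IHg ? /IHh.
Qed.

Lemma holds_on_atoms (G H : groupStr) (s : nat -> G) (t : nat -> H) f :
  on_atoms (fun a b => Defs.geq (eval_term s a) (eval_term s b)
                       <-> Defs.geq (eval_term t a) (eval_term t b)) f ->
  (holds s f <-> holds t f).
Proof. by elim: f => //= *; tauto. Qed.

Section Syllables.
Variables (V : eqType) (e : rel V) (A : zmodType).
Hypotheses (esym : symmetric e) (eirr : irreflexive e).
Local Notation syl := (V * A)%type.
Local Open Scope ring_scope.

Definition syl_seq (v : V) (a : A) : seq syl := if a == 0 then [::] else [:: (v, a)].

Fixpoint merge (x : syl) (u : seq syl) : option (seq syl) :=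
  match u with
  | [::] => None
  | y :: u' => if y.1 == x.1 then Some (syl_seq y.1 (y.2 + x.2) ++ u')
               else if e x.1 y.1 then omap (cons y) (merge x u') else None
  end.

(* [push x u] is the normal form of the product of the syllable [x] and the normal form [u]. *)
Definition push (x : syl) (u : seq syl) : seq syl :=
  if x.2 == 0 then u else if merge x u is Some u' then u' else x :: u.

Fixpoint reduced (u : seq syl) : bool :=
  if u is x :: u' then [&& x.2 != 0, merge x u' == None & reduced u'] else true.

Inductive shuffle : seq syl -> seq syl -> Prop :=
  | shuffle_refl u : shuffle u u
  | shuffle_sym u v : shuffle u v -> shuffle v u
  | shuffle_trans u v w : shuffle u v -> shuffle v w -> shuffle u w
  | shuffle_cons x u v : shuffle u v -> shuffle (x :: u) (x :: v)
  | shuffle_swap x y u : e x.1 y.1 -> shuffle (x :: y :: u) (y :: x :: u).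

Lemma shuffle_size u v : shuffle u v -> size u = size v.
Proof. by elim=> //= *; congruence. Qed.

Lemma shuffle_catl p u v : shuffle u v -> shuffle (p ++ u) (p ++ v).
Proof. by elim: p => //= x p IH /IH; apply: shuffle_cons. Qed.

Fixpoint reaches (v : V) (s : seq V) : bool :=
  if s is w :: s' then (w == v) || (e v w && reaches v s') else false.

Lemma merge_None x u : (merge x u == None) = ~~ reaches x.1 (map fst u).
Proof.
elim: u => [|y u IH] //=; case: (y.1 == x.1) => //=.
by case: (e x.1 y.1) => //=; rewrite -IH; case: (merge x u).
Qed.

Lemma adj_neq (a b : V) : e a b -> (b == a) = false.
Proof. by move=> h; apply/eqP => ba; move: h; rewrite ba eirr. Qed.

Lemma merge_cons_adj x y u : e x.1 y.1 -> merge x (y :: u) = omap (cons y) (merge x u).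
Proof. by move=> h /=; rewrite adj_neq // h. Qed.

Lemma push0 v u : push (v, 0) u = u.
Proof. by rewrite /push eqxx. Qed.

Lemma push_nz x u : x.2 != 0 -> push x u = if merge x u is Some u' then u' else x :: u.
Proof. by rewrite /push => /negbTE ->. Qed.

Lemma push_cons_adj x y u : e x.1 y.1 -> shuffle (push x (y :: u)) (y :: push x u).
Proof.
move=> h; rewrite /push; case: (x.2 == 0); first exact: shuffle_refl.
rewrite merge_cons_adj //; case: (merge x u) => [w|] /=; first exact: shuffle_refl.
exact: shuffle_swap.
Qed.

Inductive opt_shuffle : option (seq syl) -> option (seq syl) -> Prop :=
  | opt_shuffleN : opt_shuffle None None
  | opt_shuffleS u v : shuffle u v -> opt_shuffle (Some u) (Some v).

Lemma shuffle_syl_seq_cons v a y u :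
  e v y.1 -> shuffle (syl_seq v a ++ y :: u) (y :: syl_seq v a ++ u).
Proof.
by rewrite /syl_seq; case: ifP => _ /= h; [exact: shuffle_refl|exact: shuffle_swap].
Qed.

Lemma merge_shuffle x u v : shuffle u v -> opt_shuffle (merge x u) (merge x v).
Proof.
elim=> {u v} [u|u v _ IH|u v w _ IH1 _ IH2|y u v Huv IH|y z u Eyz].
- by case: (merge x u) => *; constructor; exact: shuffle_refl.
- by case: IH => *; constructor; exact: shuffle_sym.
- by case: IH1 IH2 => [|a b h]; inversion 1; constructor; apply: shuffle_trans h _.
- rewrite /=; case: (y.1 == x.1); first by constructor; apply: shuffle_catl.
  case: (e x.1 y.1) => /=; last constructor.
  by case: IH => *; constructor; apply: shuffle_cons.
- rewrite /=; have [yx|nyx] := altP (y.1 =P x.1).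
    rewrite -yx (adj_neq Eyz) Eyz /=; constructor.
    exact: shuffle_syl_seq_cons.
  have [zx|nzx] := altP (z.1 =P x.1).
    have exy : e x.1 y.1 by rewrite -zx esym.
    rewrite exy /=; constructor; apply: shuffle_sym.
    by apply: shuffle_syl_seq_cons; rewrite esym.
  case exy: (e x.1 y.1); case exz: (e x.1 z.1) => /=; try constructor.
  by case: (merge x u) => [w|] /=; constructor; exact: shuffle_swap.
Qed.

Lemma push_shuffle x u v : shuffle u v -> shuffle (push x u) (push x v).
Proof.
move=> h; rewrite /push; case: (x.2 == 0) => //.
by case: (merge_shuffle x h) => //; apply: shuffle_cons.
Qed.

Lemma foldr_push_shuffle u v s : shuffle u v -> shuffle (foldr push u s) (foldr push v s).
Proof. by elim: s => //= x s IH /IH; apply: push_shuffle. Qed.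

Lemma merge_None_keep x y t t' :
  e x.1 y.1 -> merge y t = None -> merge x t = Some t' -> merge y t' = None.
Proof.
move=> exy /eqP; rewrite merge_None => hy hx; apply/eqP; rewrite merge_None.
elim: t t' hy hx => [|z t IH] t' //= hy.
case: ifP => [/eqP zx|zx].
  case=> <-; rewrite -zx in exy.
  have eyz : e y.1 z.1 by rewrite esym.
  rewrite (adj_neq eyz) eyz /= in hy.
  by rewrite /syl_seq; case: ifP => _ //=; rewrite (adj_neq eyz) eyz.
case: ifP => // exz; case: (merge x t) (IH) => [t0|] //= IH0 [<-] /=.
by move: hy; case: (z.1 == y.1) => //=; case: (e y.1 z.1) => //= /IH0 ->.
Qed.

Lemma merge_reduced x u u' : reduced u -> merge x u = Some u' -> reduced u'.
Proof.
elim: u u' => [|y t IH] u' //= /and3P [y0 /eqP hy rt].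
case: ifP => [/eqP yx|yx].
  case=> <-; rewrite /syl_seq; case: ifP => s0 //=.
  by rewrite s0 rt andbT /= merge_None /= -(merge_None y) hy.
case: ifP => // exy; case hm: (merge x t) => [t0|] //= [<-] /=.
by rewrite y0 (IH _ rt hm) (merge_None_keep exy hy hm).
Qed.

Lemma push_reduced x u : reduced u -> reduced (push x u).
Proof.
move=> ru; rewrite /push; case: ifP => // x0.
case hm: (merge x u) => [u'|]; first exact: merge_reduced hm.
by rewrite /= x0 hm ru.
Qed.

Lemma foldr_push_reduced u s : reduced u -> reduced (foldr push u s).
Proof. by elim: s => //= x s IH /IH; apply: push_reduced. Qed.

Lemma merge_comm x y u ux uy : e x.1 y.1 ->
  merge x u = Some ux -> merge y u = Some uy ->
  exists w, merge x uy = Some w /\ merge y ux = Some w.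
Proof.
move=> exy; have eyx : e y.1 x.1 by rewrite esym.
elim: u ux uy => [|z t IH] ux uy //=.
case: ifP => [/eqP zx|zx].
  case=> <-; rewrite zx (adj_neq eyx) eyx.
  case hy: (merge y t) => [ty|] //= [<-]; exists (syl_seq z.1 (z.2 + x.2) ++ ty).
  rewrite /= zx eqxx; split => //.
  by rewrite /syl_seq; case: ifP => _ //=; rewrite (adj_neq eyx) eyx hy.
case zy: (z.1 == y.1).
  move/eqP: zy => zy; have exz : e x.1 z.1 by rewrite zy.
  rewrite exz; case hx: (merge x t) => [tx|] //= [<-] [<-].
  exists (syl_seq z.1 (z.2 + y.2) ++ tx); rewrite /= zy eqxx; split => //.
  by rewrite /syl_seq; case: ifP => _ //=; rewrite (adj_neq exy) exy hx.
case: ifP => // exz; case: ifP => // eyz.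
case hx: (merge x t) => [tx|] //= [<-]; case hy: (merge y t) => [ty|] //= [<-].
have [w [h1 h2]] := IH _ _ hx hy; exists (z :: w).
by rewrite /= zx zy exz eyz h1 h2.
Qed.

Lemma push_comm x y u : e x.1 y.1 -> shuffle (push x (push y u)) (push y (push x u)).
Proof.
move=> exy; have eyx : e y.1 x.1 by rewrite esym.
rewrite /push; case: (x.2 == 0); first exact: shuffle_refl.
case: (y.2 == 0); first exact: shuffle_refl.
case hx: (merge x u) => [ux|]; case hy: (merge y u) => [uy|].
- by have [w [-> ->]] := merge_comm exy hx hy; exact: shuffle_refl.
- by rewrite merge_cons_adj // hx /= (merge_None_keep exy hy hx); exact: shuffle_refl.
- by rewrite (merge_cons_adj _ eyx) hy /= (merge_None_keep eyx hx hy); exact: shuffle_refl.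
- by rewrite merge_cons_adj // hx (merge_cons_adj _ eyx) hy /=; exact: shuffle_swap.
Qed.

Lemma merge_None_amount v a b u : (merge (v, a) u == None) = (merge (v, b) u == None).
Proof. by rewrite !merge_None. Qed.

Lemma push_unmerged x u : merge x u = None -> push x u = syl_seq x.1 x.2 ++ u.
Proof. by case: x => v a; rewrite /push /syl_seq /= => ->; case: ifP. Qed.

Lemma push_cons_same v a c t : c != 0 -> push (v, a) ((v, c) :: t) = syl_seq v (c + a) ++ t.
Proof.
rewrite /push /= eqxx => c0; case: ifP => [/eqP ->|//].
by rewrite addr0 /syl_seq (negbTE c0).
Qed.

Lemma pushD_unmerged v a b u :
  merge (v, b) u = None -> push (v, a) (push (v, b) u) = push (v, a + b) u.
Proof.
move=> hb; have hN c : merge (v, c) u = None.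
  by apply/eqP; rewrite (merge_None_amount _ _ b) hb.
rewrite (push_unmerged (hN b)) (push_unmerged (hN (a + b))) /= /syl_seq.
have [->|b0] := eqVneq b 0; first by rewrite addr0 /= (push_unmerged (hN a)).
by rewrite /= push_cons_same // addrC.
Qed.

Lemma pushD v a b u : reduced u -> shuffle (push (v, a) (push (v, b) u)) (push (v, a + b) u).
Proof.
elim: u => [|[w c] t IH] /=.
  by move=> _; rewrite pushD_unmerged //; exact: shuffle_refl.
case/and3P=> c0 /eqP hc /IH {}IH.
have [wv|nwv] := eqVneq w v.
  subst w; rewrite push_cons_same // [push (v, a + b) _]push_cons_same // /syl_seq.
  have [cb0|cb0] := eqVneq (c + b) 0.
    have hN : merge (v, a) t = None by apply/eqP; rewrite (merge_None_amount _ _ c) hc.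
    rewrite /= (push_unmerged hN) addrCA cb0 addr0; exact: shuffle_refl.
  by rewrite /= push_cons_same // (addrC a) addrA; exact: shuffle_refl.
have [evw|nevw] := boolP (e v w); last first.
  by rewrite pushD_unmerged /= ?(negbTE nwv) ?(negbTE nevw) //; exact: shuffle_refl.
apply: shuffle_trans (push_shuffle _ (@push_cons_adj (v, b) (w, c) t evw)) _.
apply: shuffle_trans (@push_cons_adj (v, a) (w, c) _ evw) _.
apply: shuffle_trans (shuffle_cons _ IH) _.
exact: shuffle_sym (@push_cons_adj (v, a + b) (w, c) t evw).
Qed.

Lemma foldr_push_same_vertex v (s : seq (V * A)) y : reduced y -> all (fun x => x.1 == v) s ->
  shuffle (foldr push y s) (push (v, \sum_(x <- s) x.2) y).
Proof.
move=> ry; elim: s => [|[w c] s IH] /=; first by rewrite big_nil push0 => _; exact: shuffle_refl.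
case/andP=> /eqP -> /IH h; rewrite big_cons.
exact: shuffle_trans (push_shuffle _ h) (pushD _ _ _ ry).
Qed.

Lemma reduced_nz u : reduced u -> all (fun x => x.2 != 0) u.
Proof. by elim: u => //= x u IH /and3P [-> _ /IH]. Qed.

Lemma reduced_foldr_push u : reduced u -> foldr push [::] u = u.
Proof. by elim: u => //= x u IH /and3P [x0 /eqP hx /IH ->]; rewrite push_nz // hx. Qed.

End Syllables.

Arguments push {V} e {A} x u.

Lemma reduced_map (V : eqType) (e : rel V) (A B : zmodType) (f : A -> B) (u : seq (V * A)) :
  reduced e u -> all (fun x => f x.2 != 0%R) u -> reduced e (map (fun x => (x.1, f x.2)) u).
Proof.
elim: u => [|x u IH] //= /and3P [_ hx ru] /andP [fx hu].
by rewrite fx IH // andbT merge_None -map_comp; move: hx; rewrite merge_None.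
Qed.

Section NormalForm.
Variables (V : eqType) (e : rel V) (A : zmodType).
Hypotheses (esym : symmetric e) (eirr : irreflexive e).
Variables (W : Type) (E : rel W) (lift : W * bool -> V * A).
Local Open Scope ring_scope.

Definition nf (u : seq (W * bool)) : seq (V * A) := foldr (push e) [::] (map lift u).

Lemma nf_reduced u : reduced e (nf u).
Proof. exact: foldr_push_reduced. Qed.

Lemma nf_cat p q : nf (p ++ q) = foldr (push e) (nf q) (map lift p).
Proof. by rewrite /nf map_cat foldr_cat. Qed.

Hypothesis lift_inv : forall x, lift (letter_inv x) = ((lift x).1, - (lift x).2).
Hypothesis lift_comm : forall a b, E a b ->
  (lift (a, true)).1 = (lift (b, true)).1 \/ e (lift (a, true)).1 (lift (b, true)).1.

Lemma raag_eq_nf u u' : raag_eq E u u' -> shuffle e (nf u) (nf u').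
Proof.
elim=> {u u'} [u|u v _ IH|u v w _ IH1 _ IH2|u v x|u v a b Eab].
- exact: shuffle_refl.
- exact: shuffle_sym.
- exact: shuffle_trans IH2.
- rewrite !nf_cat; apply: (foldr_push_shuffle esym eirr).
  change (shuffle e (push e (lift x) (push e (lift (letter_inv x)) (nf v))) (nf v)).
  rewrite lift_inv; case: (lift x) => w c /=.
  apply: shuffle_trans (pushD esym eirr _ _ _ (nf_reduced _)) _.
  by rewrite addrN push0; exact: shuffle_refl.
- rewrite !nf_cat; apply: (foldr_push_shuffle esym eirr).
  change (shuffle e (push e (lift (a, true)) (push e (lift (b, true)) (nf v)))
                    (push e (lift (b, true)) (push e (lift (a, true)) (nf v)))).
  case: (lift_comm Eab); case: (lift (a, true)) => wa ca; case: (lift (b, true)) => wb cb /=.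
    move=> ->; apply: shuffle_trans (pushD esym eirr _ _ _ (nf_reduced _)) _.
    by rewrite addrC; apply: shuffle_sym; exact: (pushD esym eirr _ _ _ (nf_reduced _)).
  by move=> h; apply: push_comm.
Qed.

End NormalForm.

Definition sgn (b : bool) : int := if b then 1%R else (-1)%R.

Section Inflation.
Variables (V : finType) (e : rel V) (m : nat).
Hypotheses (esym : symmetric e) (eirr : irreflexive e).
Local Notation Wm := (V * 'I_m)%type.
Local Notation Am := 'rV[int]_m.
Local Notation Em := (inflation_rel e m).
Local Open Scope ring_scope.

Lemma inflation_sym : symmetric Em.
Proof.
move=> [a i] [b j]; rewrite /inflation_rel /=.
by rewrite [b == a]eq_sym [j == i]eq_sym esym.
Qed.

Definition inflation_lift (x : Wm * bool) : V * Am :=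
  (x.1.1, sgn x.2 *: delta_mx 0 x.1.2).

Lemma inflation_lift_nz x : (inflation_lift x).2 != 0.
Proof.
case: x => [[v i] b]; apply/negP => /eqP /matrixP /(_ 0 i).
by rewrite !mxE !eqxx; case: b.
Qed.

Lemma add_delta_coord (a : Am) c i j :
  (a + c *: delta_mx 0 i) 0 j = a 0 j + (if j == i then c else 0).
Proof. by rewrite !mxE eqxx /=; case: eqP; rewrite ?mulr1 ?mulr0. Qed.

Definition letter_pow (x : Wm) (n : int) : seq (Wm * bool) :=
  match n with Posz k => nseq k (x, true) | Negz k => nseq k.+1 (x, false) end.

Lemma letter_pow_vertex x n : all (fun y => y.1 == x) (letter_pow x n).
Proof. by case: n => k; rewrite all_nseq eqxx orbT. Qed.

Lemma raag_eq_letter_pow_cons x b n :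
  raag_eq Em ((x, b) :: letter_pow x n) (letter_pow x (n + sgn b)).
Proof.
case: b; case: n => [k|k]; rewrite /sgn.
- have -> : Posz k + 1 = Posz k.+1 by rewrite -addn1 PoszD.
  exact: raag_refl.
- case: k => [|k]; first exact: (raag_cancel _ [::] [::] (x, true)).
  have -> : Negz k.+1 + 1 = Negz k by rewrite !NegzE; lia.
  exact: (raag_cancel _ [::] _ (x, true)).
- case: k => [|k]; first exact: raag_refl.
  have -> : Posz k.+1 + -1 = Posz k by lia.
  exact: (raag_cancel _ [::] _ (x, false)).
- have -> : Negz k + -1 = Negz k.+1 by rewrite !NegzE; lia.
  exact: raag_refl.
Qed.

Definition realize_on (v : V) (s : seq 'I_m) (a : Am) : seq (Wm * bool) :=
  flatten [seq letter_pow (v, j) (a 0 j) | j <- s].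

Definition realize_syl (z : V * Am) : seq (Wm * bool) := realize_on z.1 (enum 'I_m) z.2.

Definition realize (u : seq (V * Am)) : seq (Wm * bool) := flatten (map realize_syl u).

Lemma realize_syl0 v : realize_syl (v, 0) = [::].
Proof. by rewrite /realize_syl /realize_on; elim: (enum 'I_m) => //= j s ->; rewrite mxE. Qed.

Lemma realize_syl_vertex v a : all (fun x : Wm * bool => x.1.1 == v) (realize_syl (v, a)).
Proof.
rewrite /realize_syl /realize_on /=; elim: (enum 'I_m) => [|j s IH] //=.
by rewrite all_cat IH andbT; apply/allP => y /(allP (letter_pow_vertex _ _)) /eqP ->.
Qed.

Lemma raag_eq_realize_on_cons v i b a s : uniq s ->
  if i \in s then raag_eq Em (((v, i), b) :: realize_on v s a)
                             (realize_on v s (a + (inflation_lift ((v, i), b)).2))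
  else realize_on v s a = realize_on v s (a + (inflation_lift ((v, i), b)).2).
Proof.
rewrite /realize_on; elim: s => [|j s IH] //=.
case/andP=> js /IH {}IH; rewrite in_cons add_delta_coord.
have [ij|nij] := eqVneq i j.
  subst j; rewrite (negbTE js) in IH; rewrite -IH.
  exact: (raag_eq_catr _ (raag_eq_letter_pow_cons _ _ _)).
rewrite addr0 /=.
case: (i \in s) IH => [h|<- //].
apply: raag_trans (_ : raag_eq Em (letter_pow (v, j) (a 0 j) ++ ((v, i), b) :: _) _).
  apply: (raag_eq_pass inflation_sym); apply/allP => y /(allP (letter_pow_vertex _ _)).
  by move=> /eqP -> /=; rewrite /inflation_rel /= eqxx nij.
exact: raag_eq_catl.
Qed.

Lemma raag_eq_realize_syl_cons x a :
  raag_eq Em (x :: realize_syl (x.1.1, a)) (realize_syl (x.1.1, a + (inflation_lift x).2)).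
Proof.
case: x => [[v i] b].
by have := raag_eq_realize_on_cons v i b a (enum_uniq 'I_m); rewrite mem_enum.
Qed.

Lemma realize_syl_seq v a t : realize (syl_seq v a ++ t) = realize_syl (v, a) ++ realize t.
Proof. by rewrite /syl_seq; case: ifP => [/eqP ->|_] //=; rewrite realize_syl0. Qed.

Lemma raag_eq_realize_merge x y y' :
  merge e (inflation_lift x) y = Some y' -> raag_eq Em (x :: realize y) (realize y').
Proof.
elim: y y' => [|[w c] t IH] y' //=.
case: ifP => [/eqP wv|wv].
  case=> <-; rewrite realize_syl_seq /= wv.
  exact: (raag_eq_catr _ (raag_eq_realize_syl_cons _ _)).
case: ifP => // evw; case hm: (merge _ _ t) => [t'|] //= [<-] /=.
apply: raag_trans (_ : raag_eq Em (realize_syl (w, c) ++ x :: realize t) _).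
  apply: (raag_eq_pass inflation_sym); apply/allP => -[[w' j] b'].
  move=> /(allP (realize_syl_vertex _ _)) /= /eqP ->.
  by rewrite /inflation_rel /= eq_sym wv evw.
exact/raag_eq_catl/IH.
Qed.

Lemma raag_eq_realize_nf w : raag_eq Em w (realize (nf e inflation_lift w)).
Proof.
elim: w => [|x w IH] /=; first exact: raag_refl.
apply: raag_trans (raag_eq_cons x IH) _.
change (nf e inflation_lift (x :: w)) with (push e (inflation_lift x) (nf e inflation_lift w)).
rewrite push_nz ?inflation_lift_nz //.
case hm: (merge _ _ _) => [y'|]; first exact: raag_eq_realize_merge.
have := raag_eq_realize_syl_cons x 0; rewrite realize_syl0 add0r => h.
exact: (raag_eq_catr _ h).
Qed.

End Inflation.

Arguments inflation_lift {V m} x.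

Section Collapse.
Variables (V : finType) (e : rel V) (m : nat).
Hypotheses (esym : symmetric e) (eirr : irreflexive e).
Variable k : 'I_m -> nat.
Local Notation Wm := (V * 'I_m)%type.
Local Notation Am := 'rV[int]_m.
Local Notation Em := (inflation_rel e m).
Local Open Scope ring_scope.

Definition collapse (x : Wm * bool) : seq (V * bool) := nseq (k x.1.2) (x.1.1, x.2).

Definition weight (a : Am) : int := \sum_(j <- enum 'I_m) a 0 j * (k j)%:R.

Definition expsum (w : seq (V * bool)) : int := \sum_(x <- w) sgn x.2.

Lemma collapse_inv x : collapse (letter_inv x) = word_inv (collapse x).
Proof. by case: x => [[v i] b]; rewrite /collapse /word_inv map_nseq rev_nseq. Qed.

Lemma collapse_comm a b : Em a b ->
  raag_eq e (collapse (a, true) ++ collapse (b, true)) (collapse (b, true) ++ collapse (a, true)).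
Proof.
case: a b => [v i] [w j]; rewrite /inflation_rel /collapse /=.
case/orP => [/andP [/eqP <- _]|/andP [_ evw]].
  by rewrite -!nseqD addnC; exact: raag_refl.
apply: (raag_eq_swap_blocks esym); apply/allP => x /nseqP [-> _].
by apply/allP => y /nseqP [-> _].
Qed.

Lemma expsum_cat u w : expsum (u ++ w) = expsum u + expsum w.
Proof. exact: big_cat. Qed.

Lemma expsum_collapse_nseq n x :
  expsum (subst_word collapse (nseq n x)) = sgn x.2 *+ (k x.1.2 * n).
Proof.
rewrite mulrnA; elim: n => [|n IH]; first by rewrite /expsum big_nil.
rewrite -[nseq n.+1 x]/([:: x] ++ nseq n x) subst_word_cat expsum_cat IH mulrS.
by rewrite /subst_word /= cats0 /expsum big_nseq iter_addr_0.
Qed.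

Lemma expsum_collapse_letter_pow v j n :
  expsum (subst_word collapse (letter_pow (v, j) n)) = n * (k j)%:R.
Proof.
case: n => n; rewrite expsum_collapse_nseq /sgn /=.
  by rewrite natrM mulrC natz.
by rewrite NegzE mulNrn natrM mulNr mulrC natz.
Qed.

Lemma expsum_collapse_realize_syl v a :
  expsum (subst_word collapse (realize_syl (v, a))) = weight a.
Proof.
rewrite /realize_syl /realize_on /weight /=.
elim: (enum 'I_m) => [|j s IH] /=; first by rewrite /expsum !big_nil.
by rewrite subst_word_cat expsum_cat IH expsum_collapse_letter_pow big_cons.
Qed.

Lemma collapse_realize_syl_vertex v a :
  all (fun x => x.1 == v) (subst_word collapse (realize_syl (v, a))).
Proof.
elim: (realize_syl (v, a)) (realize_syl_vertex v a) => [|x w IH] //= /andP [xv /IH].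
by rewrite all_cat => ->; rewrite andbT all_nseq /= xv orbT.
Qed.

Definition sign_syl (x : V * bool) : V * int := (x.1, sgn x.2).
Definition weight_syl (z : V * Am) : V * int := (z.1, weight z.2).

Lemma nf_collapse_realize (S : seq (V * Am)) :
  shuffle e (nf e sign_syl (subst_word collapse (realize S))) (foldr (push e) [::] (map weight_syl S)).
Proof.
elim: S => [|[v a] S IH]; first exact: shuffle_refl.
rewrite -[realize _]/(realize_syl (v, a) ++ realize S) subst_word_cat nf_cat.
apply: shuffle_trans (foldr_push_shuffle esym eirr _ IH) _.
have red_tail : reduced e (foldr (push e) [::] (map weight_syl S)).
  exact: foldr_push_reduced.
have same_vertex : all (fun x => x.1 == v) (map sign_syl (subst_word collapse (realize_syl (v, a)))).
  by rewrite all_map; apply: sub_all (collapse_realize_syl_vertex v a) => x.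
apply: shuffle_trans (foldr_push_same_vertex esym eirr red_tail same_vertex) _.
rewrite big_map -[\sum_(_ <- _) _]/(expsum _) expsum_collapse_realize_syl.
exact: shuffle_refl.
Qed.

Lemma sign_syl_inv x : sign_syl (letter_inv x) = ((sign_syl x).1, - (sign_syl x).2).
Proof. by case: x => v []. Qed.

Lemma sign_syl_comm a b : e a b ->
  (sign_syl (a, true)).1 = (sign_syl (b, true)).1 \/ e (sign_syl (a, true)).1 (sign_syl (b, true)).1.
Proof. by right. Qed.

(* For [S] the normal form of [u w^-1], the collapse of [u w^-1] is trivial, yet its normal
   form is [map weight_syl S], which is reduced; so [S] is empty. *)
Lemma raag_eq_of_collapse u w :
  all (fun z => weight z.2 != 0) (nf e inflation_lift (u ++ word_inv w)) ->
  raag_eq e (subst_word collapse u) (subst_word collapse w) -> raag_eq Em u w.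
Proof.
set S := nf _ _ _ => weight_nz collapse_eq.
have sound_nf := raag_eq_nf esym eirr sign_syl_inv sign_syl_comm.
have collapse_trivial : raag_eq e (subst_word collapse (u ++ word_inv w)) [::].
  by rewrite subst_word_cat subst_word_inv; [exact/raag_eq_div1|exact: collapse_inv].
have collapse_realize :
    raag_eq e (subst_word collapse (u ++ word_inv w)) (subst_word collapse (realize S)).
  exact/(subst_word_raag_eq collapse_inv collapse_comm)/raag_eq_realize_nf.
have weight_red : reduced e (map weight_syl S) by apply: reduced_map => //; exact: nf_reduced.
have nf_weight := nf_collapse_realize S; rewrite reduced_foldr_push // in nf_weight.
have S_nil : S = [::].
  have := shuffle_trans (shuffle_sym nf_weight)
            (shuffle_trans (shuffle_sym (sound_nf _ _ collapse_realize)) (sound_nf _ _ collapse_trivial)).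
  by move/shuffle_size; rewrite size_map => /size0nil.
apply/raag_eq_div1; have := raag_eq_realize_nf esym (u ++ word_inv w).
by rewrite -/S S_nil.
Qed.

End Collapse.

Section WeightChoice.
Local Open Scope ring_scope.

Fixpoint base_eval (N : int) (cs : seq int) : int :=
  if cs is c :: cs' then c + N * base_eval N cs' else 0.

Lemma base_eval_eq0 (N : nat) cs :
  all (fun c : int => (`|c| < N)%N) cs -> base_eval N cs = 0 -> all (fun c => c == 0) cs.
Proof.
elim: cs => [|c cs IH] //= /andP [hc hcs] h.
have [c0 t0] : c = 0 /\ base_eval N cs = 0.
  set t := base_eval N cs in h *.
  have [t1|[t1|t1]] : t = 0 \/ 1 <= t \/ t <= -1 by lia.
  - lia.
  - nia.
  - nia.
by rewrite c0 eqxx IH.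
Qed.

Lemma sum_base_eval (N : nat) (T : eqType) (f : T -> int) (s : seq T) : uniq s ->
  \sum_(j <- s) f j * ((N ^ index j s)%N)%:R = base_eval N (map f s).
Proof.
elim: s => [|x s IH] /=; first by rewrite big_nil.
case/andP => xs us; rewrite big_cons eqxx expn0 mulr1 -IH //.
congr (_ + _); rewrite big_seq [in RHS]big_seq mulr_sumr.
apply: eq_bigr => j js; rewrite ifN; last by apply: contraNneq xs => ->.
by rewrite expnS natrM mulrCA natz.
Qed.

(* For [k j = N ^ j] with [N] exceeding every coordinate, [weight k a] is the base-[N]
   number whose digits are the coordinates of [a]. *)
Lemma exists_weight_nz m (rows : seq 'rV[int]_m) :
  all (fun a => a != 0) rows -> exists k : 'I_m -> nat, all (fun a => weight k a != 0) rows.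
Proof.
move=> rows_nz.
set N := (\max_(a <- rows) \max_(j < m) absz (a 0%R j)).+1.
exists (fun j => (N ^ index j (enum 'I_m))%N).
apply/allP => a a_in; rewrite /weight sum_base_eval ?enum_uniq //.
apply/negP => /eqP /base_eval_eq0 coords0.
have /coords0 : all (fun c : int => (`|c| < N)%N) [seq a 0 j | j <- enum 'I_m].
  apply/allP => c /mapP [j _ ->]; rewrite ltnS.
  apply: leq_trans (@leq_bigmax _ (fun j => absz (a 0%R j)) j) _.
  exact: (@leq_bigmax_seq _ _ _ (fun a : 'rV[int]_m => \max_(j < m) absz (a 0%R j)) _ a_in).
rewrite all_map => /allP a0; move/allP/(_ a a_in): rows_nz; apply/negP; rewrite negbK.
by apply/eqP/matrixP => i j; rewrite ord1 mxE; apply/eqP/a0; rewrite mem_enum.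
Qed.

End WeightChoice.

Lemma all_flatten (T : Type) (P : pred T) (ss : seq (seq T)) :
  all P (flatten ss) = all (all P) ss.
Proof. by elim: ss => //= s ss IH; rewrite all_cat IH. Qed.

Section Transfer.
Variables (V : finType) (e : rel V) (m : nat).
Hypotheses (esym : symmetric e) (eirr : irreflexive e).
Local Notation Em := (inflation_rel e m).

Definition embed (i : 'I_m) (x : V * bool) : seq ((V * 'I_m) * bool) := [:: ((x.1, i), x.2)].

Lemma embed_inv i x : embed i (letter_inv x) = word_inv (embed i x).
Proof. by case: x. Qed.

Lemma embed_comm i a b : e a b ->
  raag_eq Em (embed i (a, true) ++ embed i (b, true)) (embed i (b, true) ++ embed i (a, true)).
Proof.
move=> eab; apply: (raag_comm [::] [::]).
by rewrite /inflation_rel /= eqxx andbF /= eq_sym (adj_neq eirr eab) eab.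
Qed.

Lemma collapse1_embed i w : subst_word (collapse (fun=> 1%N)) (subst_word (embed i) w) = w.
Proof. by elim: w => //= x w IH; rewrite /subst_word /= -/(subst_word _ _) IH; case: x. Qed.

Lemma universal_of_inflation (i : 'I_m) f :
  satisfies_universal (RAAG Em) f -> satisfies_universal (RAAG e) f.
Proof.
move=> hf s; apply: (proj2 (holds_on_atoms _)) (hf (fun n => subst_word (embed i) (s n))).
apply: on_atomsT => a b /=; rewrite !(eval_term_subst e Em (embed_inv i)); split.
  exact: (subst_word_raag_eq (embed_inv i) (embed_comm i)).
move/(subst_word_raag_eq (@collapse_inv V m (fun=> 1%N)) (collapse_comm esym _)).
by rewrite !collapse1_embed.
Qed.

Lemma universal_to_inflation f :
  satisfies_universal (RAAG e) f -> satisfies_universal (RAAG Em) f.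
Proof.
move=> hf s.
pose nf_atom (p : gterm * gterm) :=
  nf e inflation_lift (eval_term s p.1 ++ word_inv (eval_term s p.2)).
have [k k_nz] : exists k, all (fun a => weight k a != 0%R)
                              (flatten [seq map snd (nf_atom p) | p <- atoms f]).
  apply: exists_weight_nz; rewrite all_flatten all_map.
  elim: (atoms f) => //= p ps ->; rewrite andbT all_map.
  exact: (reduced_nz (nf_reduced esym eirr _ _)).
apply: (proj1 (holds_on_atoms _)) (hf (fun n => subst_word (collapse k) (s n))).
rewrite all_flatten all_map in k_nz.
apply: (on_atoms_all _ k_nz) => a b /=; rewrite all_map => nf_nz.
rewrite !(eval_term_subst Em e (@collapse_inv V m k)); split.
  exact: (raag_eq_of_collapse esym eirr nf_nz).
exact: (subst_word_raag_eq (@collapse_inv V m k) (collapse_comm esym k)).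
Qed.

End Transfer.

Theorem proposition4p2 (V : finType) (e : rel V) (m : nat) :
  simplicial e -> 1 <= m ->
  universally_equivalent (RAAG e) (RAAG (inflation_rel e m)).
Proof.
move=> [esym eirr] m_gt0 f; split; first exact: universal_to_inflation.
exact: (universal_of_inflation esym eirr (Ordinal m_gt0)).
Qed.
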